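(* Let $r_A,r_B>0$ satisfy $r_A+r_B\le CK_z\rho|\Lambda|$. Then, for $\rho\bar a^3$ small enough, the functional $$F(r_A,r_B)=\frac{8\pi\bar a}{|\Lambda|}(\rho\bar a^3)^{1/4}(r_A^2+r_B^2)+|\Lambda|^{-3/2}G(r_A,r_B)^{5/4}I(r_A,r_B)-\mu_Ar_A-\mu_Br_B$$ is convex in $(r_A,r_B)$.
   Context: $a_A,a_B,a_{AB}>0$ with $a_{AB}^2\le a_Aa_B$, $\bar a=\max\{a_A,a_B,a_{AB}\}$; $\rho>0$, $|\Lambda|>0$ a volume, $\mu_A,\mu_B\in\mathbb R$, $C>0$ a constant, $K_z=(\rho\bar a^3)^{-\nu}$ with $\nu\in(0,\frac1{10000}]$. $G(r_A,r_B)=r_A^2a_A^2+2r_Ar_Ba_{AB}^2+r_B^2a_B^2$; $I(r_A,r_B)=(8\pi)^{5/2}\frac{2\sqrt2}{15\pi^2}(\mu_+^{5/2}+\mu_-^{5/2})$ with $\mu_\pm=\sqrt{1+\xi_{AB}}\pm\sqrt{1-\xi_{AB}}$ and $\xi_{AB}=\frac{2r_Ar_B(a_Aa_B-a_{AB}^2)}{r_A^2a_A^2+2r_Ar_Ba_{AB}^2+r_B^2a_B^2}$. *)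

From Stdlib Require Import Reals Lra.
Open Scope R_scope.

(* x^(5/2) for x >= 0, written exactly as x^2 * sqrt x (valid also at x = 0). *)
Definition pow52 (x : R) : R := x ^ 2 * sqrt x.

Definition abar (aA aB aAB : R) : R := Rmax aA (Rmax aB aAB).

Definition Gfun (aA aB aAB rA rB : R) : R :=
  rA ^ 2 * aA ^ 2 + 2 * rA * rB * aAB ^ 2 + rB ^ 2 * aB ^ 2.

Definition xiAB (aA aB aAB rA rB : R) : R :=
  2 * rA * rB * (aA * aB - aAB ^ 2) / Gfun aA aB aAB rA rB.

Definition mu_plus (aA aB aAB rA rB : R) : R :=
  sqrt (1 + xiAB aA aB aAB rA rB) + sqrt (1 - xiAB aA aB aAB rA rB).

Definition mu_minus (aA aB aAB rA rB : R) : R :=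
  sqrt (1 + xiAB aA aB aAB rA rB) - sqrt (1 - xiAB aA aB aAB rA rB).

Definition Ifun (aA aB aAB rA rB : R) : R :=
  pow52 (8 * PI) * (2 * sqrt 2 / (15 * PI ^ 2)) *
  (pow52 (mu_plus aA aB aAB rA rB) + pow52 (mu_minus aA aB aAB rA rB)).

Definition Kz (aA aB aAB rho nu : R) : R :=
  Rpower (rho * abar aA aB aAB ^ 3) (- nu).

Definition Ffun (aA aB aAB rho Lam muA muB rA rB : R) : R :=
  let ab := abar aA aB aAB in
  8 * PI * ab / Lam * Rpower (rho * ab ^ 3) (1 / 4) * (rA ^ 2 + rB ^ 2)
  + Rpower Lam (- (3 / 2)) * Rpower (Gfun aA aB aAB rA rB) (5 / 4)
      * Ifun aA aB aAB rA rB
  - muA * rA - muB * rB.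

Definition domF (aA aB aAB rho Lam C nu rA rB : R) : Prop :=
  0 < rA /\ 0 < rB /\ rA + rB <= C * Kz aA aB aAB rho nu * rho * Lam.

Definition convex_on2 (D : R -> R -> Prop) (f : R -> R -> R) : Prop :=
  forall x1 y1 x2 y2 t, D x1 y1 -> D x2 y2 -> 0 <= t <= 1 ->
    f (t * x1 + (1 - t) * x2) (t * y1 + (1 - t) * y2)
    <= t * f x1 y1 + (1 - t) * f x2 y2.

From Stdlib Require Import Reals Lra Psatz.
Open Scope R_scope.

(* Write D = r_A r_B (a_A a_B - a_AB^2).  Since G (1 + xi) = (r_A a_A + r_B a_B)^2
   and G (1 - xi) = (r_A a_A + r_B a_B)^2 - 4 D, the numbers sqrt G mu_(+/-) are
   exactly twice the eigenvalues of the 2x2 matrix r_A u u^T + r_B v v^T, where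
   u, v are vectors with Gram matrix [[a_A, a_AB], [a_AB, a_B]].  This matrix is
   positive semidefinite and depends linearly on (r_A, r_B), so
   G^(5/4) I = const * tr (r_A u u^T + r_B v v^T)^(5/2) is convex: a trace function
   tr f(M) with f convex is convex on positive semidefinite matrices (Peierls:
   in the eigenbasis of a convex combination, apply Jensen to the diagonal entries
   of each summand, which are majorized by its eigenvalues).  The remaining terms of
   F are a nonnegative multiple of r_A^2 + r_B^2 and a linear function, so F is
   convex for every value of rho. *)

Definition convex_on_nonneg (f : R -> R) : Prop :=
  forall x y t, 0 <= x -> 0 <= y -> 0 <= t <= 1 ->
    f (t * x + (1 - t) * y) <= t * f x + (1 - t) * f y.

Lemma convex_on_nonneg_of_tangents (f k : R -> R) :
  (forall m y, 0 <= m -> 0 <= y -> f m + k m * (y - m) <= f y) ->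
  convex_on_nonneg f.
Proof.
  intros Htan x y t Hx Hy Ht.
  set (m := t * x + (1 - t) * y).
  assert (Hm : 0 <= m) by (unfold m; nra).
  pose proof (Htan m x Hm Hx) as Tx.
  pose proof (Htan m y Hm Hy) as Ty.
  assert (Cx : t * (f m + k m * (x - m)) <= t * f x)
    by (apply Rmult_le_compat_l; lra).
  assert (Cy : (1 - t) * (f m + k m * (y - m)) <= (1 - t) * f y)
    by (apply Rmult_le_compat_l; lra).
  assert (E : t * (f m + k m * (x - m)) + (1 - t) * (f m + k m * (y - m)) = f m)
    by (unfold m; ring).
  lra.
Qed.

Lemma convex_sum_le_extremes (f : R -> R) lo z hi :
  convex_on_nonneg f -> 0 <= lo -> lo <= z <= hi ->
  f z + f (hi + lo - z) <= f hi + f lo.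
Proof.
  intros Hf Hlo Hz.
  destruct (Req_dec hi lo) as [E | E].
  - replace z with lo by lra. subst hi.
    replace (lo + lo - lo) with lo by ring. lra.
  - set (s := (z - lo) / (hi - lo)).
    assert (Hs : s * (hi - lo) = z - lo) by (unfold s; field; lra).
    assert (Hs01 : 0 <= s <= 1) by (split; nra).
    replace z with (s * hi + (1 - s) * lo) by nra.
    replace (hi + lo - (s * hi + (1 - s) * lo)) with (s * lo + (1 - s) * hi) by ring.
    pose proof (Hf hi lo s ltac:(lra) Hlo Hs01).
    pose proof (Hf lo hi s Hlo ltac:(lra) Hs01).
    lra.
Qed.

Lemma fifth_power_tangent a b : 0 <= a -> 0 <= b ->
  a ^ 5 + 5 / 2 * a ^ 3 * (b ^ 2 - a ^ 2) <= b ^ 5.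
Proof.
  intros Ha Hb.
  assert (Hpos : 0 <= (b - a) ^ 2 * (2 * b ^ 3 + 4 * a * b ^ 2 + 6 * a ^ 2 * b + 3 * a ^ 3)).
  { apply Rmult_le_pos; [apply pow2_ge_0 |].
    assert (0 <= a * b) by nra. nra. }
  nra.
Qed.

Lemma pow52_sqrt x : 0 <= x -> pow52 x = sqrt x ^ 5.
Proof.
  intros Hx. unfold pow52. rewrite <- (pow2_sqrt x Hx) at 1. ring.
Qed.

Lemma pow52_convex : convex_on_nonneg pow52.
Proof.
  apply (convex_on_nonneg_of_tangents pow52 (fun m => 5 / 2 * sqrt m ^ 3)).
  intros m y Hm Hy.
  pose proof (fifth_power_tangent (sqrt m) (sqrt y) (sqrt_pos m) (sqrt_pos y)) as T.
  rewrite !pow2_sqrt in T by assumption.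
  rewrite !pow52_sqrt by assumption. exact T.
Qed.

Lemma pow52_mult k m : 0 <= k -> pow52 (k * m) = pow52 k * pow52 m.
Proof. intros Hk. unfold pow52. rewrite sqrt_mult_alt by exact Hk. ring. Qed.

Lemma Rpower_five_fourths x : 0 < x -> Rpower x (5 / 4) = pow52 (sqrt x).
Proof.
  intros Hx. unfold pow52.
  replace (5 / 4) with (1 + / 2 * / 2) by field.
  rewrite Rpower_plus, Rpower_1, <- Rpower_mult, (Rpower_sqrt x Hx), Rpower_sqrt
    by (try apply sqrt_lt_R0; assumption).
  rewrite pow2_sqrt by lra. reflexivity.
Qed.

Record sym2 : Type := Sym2 { s11 : R; s12 : R; s22 : R }.

Definition qform (M : sym2) (c s : R) : R :=
  s11 M * c ^ 2 + 2 * s12 M * c * s + s22 M * s ^ 2.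

Definition psd2 (M : sym2) : Prop := forall c s, 0 <= qform M c s.

Definition sym2_lerp (t : R) (M N : sym2) : sym2 :=
  Sym2 (t * s11 M + (1 - t) * s11 N) (t * s12 M + (1 - t) * s12 N)
       (t * s22 M + (1 - t) * s22 N).

Definition eig_radius (M : sym2) : R :=
  sqrt (((s11 M - s22 M) / 2) ^ 2 + s12 M ^ 2).

Definition eig_hi (M : sym2) : R := (s11 M + s22 M) / 2 + eig_radius M.

Definition eig_lo (M : sym2) : R := (s11 M + s22 M) / 2 - eig_radius M.

Definition trace_fun (f : R -> R) (M : sym2) : R := f (eig_hi M) + f (eig_lo M).

Lemma eig_radius_sq M : eig_radius M ^ 2 = ((s11 M - s22 M) / 2) ^ 2 + s12 M ^ 2.
Proof.
  apply pow2_sqrt. pose proof (pow2_ge_0 ((s11 M - s22 M) / 2)).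
  pose proof (pow2_ge_0 (s12 M)). lra.
Qed.

Lemma eig_lo_le_hi M : eig_lo M <= eig_hi M.
Proof.
  unfold eig_lo, eig_hi.
  pose proof (sqrt_pos (((s11 M - s22 M) / 2) ^ 2 + s12 M ^ 2)).
  fold (eig_radius M) in *. lra.
Qed.

Lemma eig_hi_add_lo M : eig_hi M + eig_lo M = s11 M + s22 M.
Proof. unfold eig_hi, eig_lo. field. Qed.

Lemma eig_hi_mul_lo M : eig_hi M * eig_lo M = s11 M * s22 M - s12 M ^ 2.
Proof.
  unfold eig_hi, eig_lo.
  replace (((s11 M + s22 M) / 2 + eig_radius M) * ((s11 M + s22 M) / 2 - eig_radius M))
    with (((s11 M + s22 M) / 2) ^ 2 - eig_radius M ^ 2) by ring.
  rewrite eig_radius_sq. field.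
Qed.

Lemma qform_lerp t M N c s :
  qform (sym2_lerp t M N) c s = t * qform M c s + (1 - t) * qform N c s.
Proof. unfold qform, sym2_lerp; cbn [s11 s12 s22]; ring. Qed.

Lemma qform_scale M k c s : qform M (k * c) (k * s) = k ^ 2 * qform M c s.
Proof. unfold qform; ring. Qed.

Lemma qform_add_rot M c s : c ^ 2 + s ^ 2 = 1 ->
  qform M c s + qform M (- s) c = eig_hi M + eig_lo M.
Proof.
  intros Hcs. rewrite eig_hi_add_lo, <- (Rmult_1_r (s11 M + s22 M)), <- Hcs.
  unfold qform; ring.
Qed.

(* The determinant of M in the orthonormal basis (c, s), (-s, c); the squared term is
   the off-diagonal entry in that basis. *)
Lemma qform_mul_rot M c s : c ^ 2 + s ^ 2 = 1 ->
  qform M c s * qform M (- s) c - ((s22 M - s11 M) * c * s + s12 M * (c ^ 2 - s ^ 2)) ^ 2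
  = eig_hi M * eig_lo M.
Proof.
  intros Hcs. rewrite eig_hi_mul_lo.
  rewrite <- (Rmult_1_r (s11 M * s22 M - s12 M ^ 2)), <- (pow1 2), <- Hcs.
  unfold qform; ring.
Qed.

Lemma qform_between M c s : c ^ 2 + s ^ 2 = 1 ->
  eig_lo M <= qform M c s <= eig_hi M.
Proof.
  intros Hcs.
  pose proof (qform_add_rot M c s Hcs) as Hsum.
  pose proof (qform_mul_rot M c s Hcs) as Hdet.
  pose proof (eig_lo_le_hi M).
  pose proof (pow2_ge_0 ((s22 M - s11 M) * c * s + s12 M * (c ^ 2 - s ^ 2))).
  assert (Hprod : (qform M c s - eig_hi M) * (qform M c s - eig_lo M) <= 0) by nra.
  split; nra.
Qed.

Lemma eig_hi_root M :
  eig_hi M ^ 2 - (s11 M + s22 M) * eig_hi M + (s11 M * s22 M - s12 M ^ 2) = 0.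
Proof. rewrite <- eig_hi_add_lo, <- eig_hi_mul_lo. ring. Qed.

Lemma qform_eigvec M :
  qform M (s12 M) (eig_hi M - s11 M)
  = eig_hi M * (s12 M ^ 2 + (eig_hi M - s11 M) ^ 2).
Proof.
  apply Rminus_diag_uniq.
  transitivity (- (eig_hi M - s11 M)
                * (eig_hi M ^ 2 - (s11 M + s22 M) * eig_hi M + (s11 M * s22 M - s12 M ^ 2))).
  - unfold qform; ring.
  - rewrite eig_hi_root. ring.
Qed.

Lemma eig_hi_attained M : exists c s, c ^ 2 + s ^ 2 = 1 /\ qform M c s = eig_hi M.
Proof.
  pose proof (qform_eigvec M) as Hv.
  destruct (Req_dec (s12 M ^ 2 + (eig_hi M - s11 M) ^ 2) 0) as [Hz | Hnz].
  - exists 1, 0. split; [ring |].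
    pose proof (pow2_ge_0 (s12 M)). pose proof (pow2_ge_0 (eig_hi M - s11 M)).
    unfold qform. nra.
  - assert (Hpos : 0 < s12 M ^ 2 + (eig_hi M - s11 M) ^ 2).
    { pose proof (pow2_ge_0 (s12 M)). pose proof (pow2_ge_0 (eig_hi M - s11 M)). lra. }
    pose proof (pow2_sqrt _ (Rlt_le _ _ Hpos)) as Hn.
    pose proof (sqrt_lt_R0 _ Hpos) as Hn0.
    set (n := sqrt (s12 M ^ 2 + (eig_hi M - s11 M) ^ 2)) in *. clearbody n.
    exists (/ n * s12 M), (/ n * (eig_hi M - s11 M)).
    rewrite qform_scale, Hv. split.
    + transitivity ((s12 M ^ 2 + (eig_hi M - s11 M) ^ 2) / n ^ 2); [field; lra |].
      rewrite <- Hn. field. lra.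
    + rewrite <- Hn. field. lra.
Qed.

Lemma qform_rot_eig_lo M c s : c ^ 2 + s ^ 2 = 1 ->
  qform M c s = eig_hi M -> qform M (- s) c = eig_lo M.
Proof. intros Hcs Hhi. pose proof (qform_add_rot M c s Hcs). lra. Qed.

Lemma eig_lo_ge0 M : psd2 M -> 0 <= eig_lo M.
Proof.
  intros HM. destruct (eig_hi_attained M) as (c & s & Hcs & Hhi).
  rewrite <- (qform_rot_eig_lo M c s Hcs Hhi). apply HM.
Qed.

(* Peierls' inequality: the diagonal of M in any orthonormal basis is majorized by
   its eigenvalues. *)
Lemma trace_fun_ge_qform f M c s :
  convex_on_nonneg f -> psd2 M -> c ^ 2 + s ^ 2 = 1 ->
  f (qform M c s) + f (qform M (- s) c) <= trace_fun f M.
Proof.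
  intros Hf HM Hcs.
  replace (qform M (- s) c) with (eig_hi M + eig_lo M - qform M c s)
    by (rewrite <- (qform_add_rot M c s Hcs); ring).
  apply convex_sum_le_extremes; [exact Hf | apply eig_lo_ge0, HM |].
  apply qform_between, Hcs.
Qed.

Lemma trace_fun_convex f M N t :
  convex_on_nonneg f -> psd2 M -> psd2 N -> 0 <= t <= 1 ->
  trace_fun f (sym2_lerp t M N) <= t * trace_fun f M + (1 - t) * trace_fun f N.
Proof.
  intros Hf HM HN Ht.
  destruct (eig_hi_attained (sym2_lerp t M N)) as (c & s & Hcs & Hhi).
  unfold trace_fun at 1.
  rewrite <- Hhi, <- (qform_rot_eig_lo _ c s Hcs Hhi), !qform_lerp.
  pose proof (Hf _ _ t (HM c s) (HN c s) Ht) as Jhi.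
  pose proof (Hf _ _ t (HM (- s) c) (HN (- s) c) Ht) as Jlo.
  pose proof (trace_fun_ge_qform f M c s Hf HM Hcs) as PM.
  pose proof (trace_fun_ge_qform f N c s Hf HN Hcs) as PN.
  apply (Rmult_le_compat_l t) in PM; [| lra].
  apply (Rmult_le_compat_l (1 - t)) in PN; [| lra].
  lra.
Qed.

Definition gram2 (u1 u2 v1 v2 x y : R) : sym2 :=
  Sym2 (x * u1 ^ 2 + y * v1 ^ 2) (x * u1 * u2 + y * v1 * v2) (x * u2 ^ 2 + y * v2 ^ 2).

Lemma qform_gram2 u1 u2 v1 v2 x y c s :
  qform (gram2 u1 u2 v1 v2 x y) c s = x * (u1 * c + u2 * s) ^ 2 + y * (v1 * c + v2 * s) ^ 2.
Proof. unfold qform, gram2; cbn [s11 s12 s22]; ring. Qed.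

Lemma gram2_psd u1 u2 v1 v2 x y : 0 <= x -> 0 <= y -> psd2 (gram2 u1 u2 v1 v2 x y).
Proof.
  intros Hx Hy c s. rewrite qform_gram2.
  pose proof (pow2_ge_0 (u1 * c + u2 * s)). pose proof (pow2_ge_0 (v1 * c + v2 * s)).
  nra.
Qed.

Lemma gram2_lerp u1 u2 v1 v2 x1 y1 x2 y2 t :
  gram2 u1 u2 v1 v2 (t * x1 + (1 - t) * x2) (t * y1 + (1 - t) * y2)
  = sym2_lerp t (gram2 u1 u2 v1 v2 x1 y1) (gram2 u1 u2 v1 v2 x2 y2).
Proof. unfold gram2, sym2_lerp; cbn [s11 s12 s22]; f_equal; ring. Qed.

Section GramEigenvalues.

Variables (aA aB aAB u1 u2 v1 v2 x y : R).
Hypotheses (Hu : u1 ^ 2 + u2 ^ 2 = aA) (Hv : v1 ^ 2 + v2 ^ 2 = aB)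
  (Huv : u1 * v1 + u2 * v2 = aAB).

Lemma gram2_twice_radius :
  2 * eig_radius (gram2 u1 u2 v1 v2 x y)
  = sqrt ((x * aA - y * aB) ^ 2 + 4 * x * y * aAB ^ 2).
Proof.
  unfold eig_radius; cbn [s11 s12 s22].
  replace ((x * aA - y * aB) ^ 2 + 4 * x * y * aAB ^ 2) with
    (2 ^ 2 * (((x * u1 ^ 2 + y * v1 ^ 2 - (x * u2 ^ 2 + y * v2 ^ 2)) / 2) ^ 2
              + (x * u1 * u2 + y * v1 * v2) ^ 2))
    by (subst aA aB aAB; field).
  rewrite sqrt_mult_alt, sqrt_pow2 by lra. reflexivity.
Qed.

Lemma gram2_twice_eig_hi :
  2 * eig_hi (gram2 u1 u2 v1 v2 x y)
  = (x * aA + y * aB) + sqrt ((x * aA - y * aB) ^ 2 + 4 * x * y * aAB ^ 2).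
Proof.
  rewrite <- gram2_twice_radius. unfold eig_hi, gram2; cbn [s11 s12 s22].
  subst aA aB. field.
Qed.

Lemma gram2_twice_eig_lo :
  2 * eig_lo (gram2 u1 u2 v1 v2 x y)
  = (x * aA + y * aB) - sqrt ((x * aA - y * aB) ^ 2 + 4 * x * y * aAB ^ 2).
Proof.
  rewrite <- gram2_twice_radius. unfold eig_lo, gram2; cbn [s11 s12 s22].
  subst aA aB. field.
Qed.

End GramEigenvalues.

Lemma gram_factor aA aB aAB : 0 < aA -> aAB ^ 2 <= aA * aB ->
  exists u1 u2 v1 v2,
    u1 ^ 2 + u2 ^ 2 = aA /\ v1 ^ 2 + v2 ^ 2 = aB /\ u1 * v1 + u2 * v2 = aAB.
Proof.
  intros HA Hcs.
  pose proof (sqrt_lt_R0 _ HA) as Hs.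
  pose proof (pow2_sqrt _ (Rlt_le _ _ HA)) as Hs2.
  set (s := sqrt aA) in *. clearbody s. subst aA.
  assert (Hq : 0 <= aB - (aAB / s) ^ 2).
  { replace (aB - (aAB / s) ^ 2) with ((s ^ 2 * aB - aAB ^ 2) / s ^ 2) by (field; lra).
    apply Rmult_le_pos; [lra | apply Rlt_le, Rinv_0_lt_compat; nra]. }
  exists s, 0, (aAB / s), (sqrt (aB - (aAB / s) ^ 2)).
  rewrite pow2_sqrt by exact Hq.
  split; [| split]; [ring | ring | field; lra].
Qed.

Lemma Gfun_pos aA aB aAB rA rB : 0 < aA -> 0 < rA -> 0 <= rB ->
  0 < Gfun aA aB aAB rA rB.
Proof.
  intros HA HrA HrB. unfold Gfun.
  assert (0 < rA ^ 2 * aA ^ 2) by (apply Rmult_lt_0_compat; apply pow_lt; assumption).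
  assert (0 <= rA * rB * aAB ^ 2)
    by (apply Rmult_le_pos; [nra | apply pow2_ge_0]).
  assert (0 <= rB ^ 2 * aB ^ 2) by (apply Rmult_le_pos; apply pow2_ge_0).
  lra.
Qed.

Section GfunXi.

Variables (aA aB aAB rA rB : R).
Hypothesis HG : 0 < Gfun aA aB aAB rA rB.

Lemma Gfun_mul_one_plus_xi :
  Gfun aA aB aAB rA rB * (1 + xiAB aA aB aAB rA rB) = (rA * aA + rB * aB) ^ 2.
Proof.
  unfold xiAB. unfold Gfun in *. field. lra.
Qed.

Lemma Gfun_mul_one_minus_xi :
  Gfun aA aB aAB rA rB * (1 - xiAB aA aB aAB rA rB)
  = (rA * aA - rB * aB) ^ 2 + 4 * rA * rB * aAB ^ 2.
Proof.
  unfold xiAB. unfold Gfun in *. field. lra.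
Qed.

Hypothesis Htr : 0 <= rA * aA + rB * aB.

Lemma sqrt_Gfun_mul_mu_plus :
  sqrt (Gfun aA aB aAB rA rB) * mu_plus aA aB aAB rA rB
  = (rA * aA + rB * aB) + sqrt ((rA * aA - rB * aB) ^ 2 + 4 * rA * rB * aAB ^ 2).
Proof.
  unfold mu_plus. rewrite Rmult_plus_distr_l, <- !sqrt_mult_alt by lra.
  rewrite Gfun_mul_one_plus_xi, Gfun_mul_one_minus_xi, sqrt_pow2 by exact Htr.
  reflexivity.
Qed.

Lemma sqrt_Gfun_mul_mu_minus :
  sqrt (Gfun aA aB aAB rA rB) * mu_minus aA aB aAB rA rB
  = (rA * aA + rB * aB) - sqrt ((rA * aA - rB * aB) ^ 2 + 4 * rA * rB * aAB ^ 2).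
Proof.
  unfold mu_minus. rewrite Rmult_minus_distr_l, <- !sqrt_mult_alt by lra.
  rewrite Gfun_mul_one_plus_xi, Gfun_mul_one_minus_xi, sqrt_pow2 by exact Htr.
  reflexivity.
Qed.

End GfunXi.

Definition I_const : R := pow52 (8 * PI) * (2 * sqrt 2 / (15 * PI ^ 2)).

Lemma pow52_ge0 x : 0 <= pow52 x.
Proof. unfold pow52. apply Rmult_le_pos; [apply pow2_ge_0 | apply sqrt_pos]. Qed.

Lemma I_const_ge0 : 0 <= I_const.
Proof.
  unfold I_const. pose proof PI_RGT_0. pose proof (sqrt_pos 2).
  apply Rmult_le_pos; [apply pow52_ge0 |].
  apply Rmult_le_pos; [lra |]. apply Rlt_le, Rinv_0_lt_compat.
  pose proof (pow_lt PI 2 PI_RGT_0). lra.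
Qed.

Lemma Gfun_Ifun_trace aA aB aAB u1 u2 v1 v2 rA rB :
  u1 ^ 2 + u2 ^ 2 = aA -> v1 ^ 2 + v2 ^ 2 = aB -> u1 * v1 + u2 * v2 = aAB ->
  0 < aA -> 0 < aB -> 0 < rA -> 0 < rB ->
  Rpower (Gfun aA aB aAB rA rB) (5 / 4) * Ifun aA aB aAB rA rB
  = I_const * pow52 2 * trace_fun pow52 (gram2 u1 u2 v1 v2 rA rB).
Proof.
  intros Hu Hv Huv HA HB HrA HrB.
  pose proof (Gfun_pos aA aB aAB rA rB HA HrA (Rlt_le _ _ HrB)) as HG.
  assert (Htr : 0 <= rA * aA + rB * aB) by nra.
  rewrite Rpower_five_fourths by exact HG.
  transitivity (I_const * (pow52 (sqrt (Gfun aA aB aAB rA rB) * mu_plus aA aB aAB rA rB)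
                           + pow52 (sqrt (Gfun aA aB aAB rA rB) * mu_minus aA aB aAB rA rB))).
  { rewrite !pow52_mult by apply sqrt_pos. unfold Ifun, I_const. ring. }
  rewrite sqrt_Gfun_mul_mu_plus, sqrt_Gfun_mul_mu_minus by assumption.
  rewrite <- (gram2_twice_eig_hi aA aB aAB u1 u2 v1 v2 rA rB Hu Hv Huv),
          <- (gram2_twice_eig_lo aA aB aAB u1 u2 v1 v2 rA rB Hu Hv Huv),
          !pow52_mult by lra.
  unfold trace_fun. ring.
Qed.

Section ConvexOn2.

Variable D : R -> R -> Prop.

Lemma convex_on2_subset (E : R -> R -> Prop) f :
  (forall x y, D x y -> E x y) -> convex_on2 E f -> convex_on2 D f.
Proof. intros HDE Hf x1 y1 x2 y2 t H1 H2 Ht. apply Hf; auto. Qed.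

Lemma convex_on2_add f g :
  convex_on2 D f -> convex_on2 D g -> convex_on2 D (fun x y => f x y + g x y).
Proof.
  intros Hf Hg x1 y1 x2 y2 t H1 H2 Ht.
  pose proof (Hf x1 y1 x2 y2 t H1 H2 Ht). pose proof (Hg x1 y1 x2 y2 t H1 H2 Ht). lra.
Qed.

Lemma convex_on2_scale c f :
  0 <= c -> convex_on2 D f -> convex_on2 D (fun x y => c * f x y).
Proof.
  intros Hc Hf x1 y1 x2 y2 t H1 H2 Ht.
  pose proof (Rmult_le_compat_l c _ _ Hc (Hf x1 y1 x2 y2 t H1 H2 Ht)). lra.
Qed.

Lemma convex_on2_sub_linear f a b :
  convex_on2 D f -> convex_on2 D (fun x y => f x y - a * x - b * y).
Proof.
  intros Hf x1 y1 x2 y2 t H1 H2 Ht.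
  pose proof (Hf x1 y1 x2 y2 t H1 H2 Ht). lra.
Qed.

Lemma convex_on2_sum_sq : convex_on2 D (fun x y => x ^ 2 + y ^ 2).
Proof.
  intros x1 y1 x2 y2 t _ _ Ht.
  pose proof (pow2_ge_0 (x1 - x2)). pose proof (pow2_ge_0 (y1 - y2)).
  assert (0 <= t * (1 - t) * ((x1 - x2) ^ 2 + (y1 - y2) ^ 2))
    by (apply Rmult_le_pos; nra).
  nra.
Qed.

End ConvexOn2.

Definition pos_quadrant (x y : R) : Prop := 0 < x /\ 0 < y.

Lemma convex_on2_pos_quadrant_ext f g :
  (forall x y, pos_quadrant x y -> f x y = g x y) ->
  convex_on2 pos_quadrant g -> convex_on2 pos_quadrant f.
Proof.
  intros Hfg Hg x1 y1 x2 y2 t [Hx1 Hy1] [Hx2 Hy2] Ht.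
  assert (Hm : pos_quadrant (t * x1 + (1 - t) * x2) (t * y1 + (1 - t) * y2))
    by (split; nra).
  rewrite (Hfg _ _ Hm), (Hfg x1 y1), (Hfg x2 y2) by (split; assumption).
  apply Hg; [split; assumption .. | exact Ht].
Qed.

Lemma gram2_trace_convex u1 u2 v1 v2 f : convex_on_nonneg f ->
  convex_on2 pos_quadrant (fun x y => trace_fun f (gram2 u1 u2 v1 v2 x y)).
Proof.
  intros Hf x1 y1 x2 y2 t [Hx1 Hy1] [Hx2 Hy2] Ht.
  rewrite gram2_lerp.
  apply trace_fun_convex; [exact Hf | apply gram2_psd; lra .. | exact Ht].
Qed.

Lemma Rpower_pos x y : 0 < Rpower x y.
Proof. apply exp_pos. Qed.

Lemma abar_pos aA aB aAB : 0 < aA -> 0 < abar aA aB aAB.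
Proof. intros HA. pose proof (Rmax_l aA (Rmax aB aAB)). unfold abar. lra. Qed.

Theorem lemmaF1 :
  forall (aA aB aAB C nu : R),
    0 < aA -> 0 < aB -> 0 < aAB -> aAB ^ 2 <= aA * aB ->
    0 < C -> 0 < nu <= 1 / 10000 ->
    exists eps : R, 0 < eps /\
      forall (rho Lam muA muB : R),
        0 < rho -> 0 < Lam ->
        rho * abar aA aB aAB ^ 3 < eps ->
        convex_on2 (domF aA aB aAB rho Lam C nu)
                   (Ffun aA aB aAB rho Lam muA muB).
Proof.
  intros aA aB aAB C nu HA HB _ Hcs _ _.
  exists 1. split; [lra |].
  intros rho Lam muA muB _ HLam _.
  destruct (gram_factor aA aB aAB HA Hcs) as (u1 & u2 & v1 & v2 & Hu & Hv & Huv).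
  apply (convex_on2_subset _ pos_quadrant);
    [intros x y (Hx & Hy & _); split; assumption |].
  set (c1 := 8 * PI * abar aA aB aAB / Lam * Rpower (rho * abar aA aB aAB ^ 3) (1 / 4)).
  set (c2 := Rpower Lam (- (3 / 2)) * (I_const * pow52 2)).
  apply (convex_on2_pos_quadrant_ext _ (fun x y =>
           c1 * (x ^ 2 + y ^ 2) + c2 * trace_fun pow52 (gram2 u1 u2 v1 v2 x y)
           - muA * x - muB * y)).
  - intros x y [Hx Hy]. unfold Ffun, c1, c2. cbv zeta.
    rewrite (Rmult_assoc (Rpower Lam _)), (Gfun_Ifun_trace aA aB aAB u1 u2 v1 v2) by assumption.
    ring.
  - apply convex_on2_sub_linear, convex_on2_add; apply convex_on2_scale.
    + pose proof PI_RGT_0. pose proof (abar_pos aA aB aAB HA).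
      pose proof (Rpower_pos (rho * abar aA aB aAB ^ 3) (1 / 4)).
      unfold c1. apply Rmult_le_pos; [| lra].
      apply Rlt_le, Rdiv_lt_0_compat; [nra | exact HLam].
    + apply convex_on2_sum_sq.
    + pose proof (Rpower_pos Lam (- (3 / 2))). pose proof I_const_ge0.
      pose proof (pow52_ge0 2). unfold c2. apply Rmult_le_pos; [lra | nra].
    + apply gram2_trace_convex, pow52_convex.
Qed.
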